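(* Let $G$ be a graph with adjacency matrix $A$, signless Laplacian $Q$, and maximum degree $\Delta$. (i) If $0\le\alpha\le1/2$, then $\rho(A_\alpha(G))\ge(1-\alpha)\rho(Q)+(2\alpha-1)\Delta$. If $G$ is connected and irregular, equality holds if and only if $\alpha=1/2$. (ii) If $1/2\le\alpha\le1$, then $\rho(A_\alpha(G))\ge\alpha\rho(Q)+(1-2\alpha)\rho(A)$. If $G$ is connected and irregular, equality holds if and only if $\alpha=1/2$.
   Context: For a graph $G$, $A(G)$ is the adjacency matrix, $D(G)$ the diagonal degree matrix, $Q(G)=D(G)+A(G)$ the signless Laplacian, and $A_\alpha(G)=\alpha D(G)+(1-\alpha)A(G)$ for $\alpha\in[0,1]$. $\rho(M)$ is the largest eigenvalue of a real symmetric matrix $M$. A graph is irregular if not all its vertices have the same degree. *)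

From HB Require Import structures.
From mathcomp Require Import all_boot all_order all_algebra.
Set Implicit Arguments. Unset Strict Implicit. Unset Printing Implicit Defensive.
Import Order.TTheory GRing.Theory Num.Theory.
Local Open Scope ring_scope.

Definition simple_graph (n : nat) (e : rel 'I_n) : Prop :=
  symmetric e /\ irreflexive e.

Definition deg (n : nat) (e : rel 'I_n) (i : 'I_n) : nat := #|[set j | e i j]|.

Definition maxdeg (n : nat) (e : rel 'I_n) : nat := (\max_(i < n) deg e i)%N.

Definition adjmx (R : nzRingType) (n : nat) (e : rel 'I_n) : 'M[R]_n :=
  \matrix_(i, j) (e i j)%:R.

Definition degmx (R : nzRingType) (n : nat) (e : rel 'I_n) : 'M[R]_n :=
  \matrix_(i, j) (if i == j then (deg e i)%:R else 0).

Definition signlessQ (R : nzRingType) (n : nat) (e : rel 'I_n) : 'M[R]_n :=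
  degmx R e + adjmx R e.

Definition Aalpha (R : nzRingType) (n : nat) (e : rel 'I_n) (a : R) : 'M[R]_n :=
  a *: degmx R e + (1 - a) *: adjmx R e.

Definition is_largest_eig (R : realFieldType) (n : nat) (M : 'M[R]_n) (r : R) : Prop :=
  eigenvalue M r /\ (forall mu, eigenvalue M mu -> mu <= r).

Definition connected_graph (n : nat) (e : rel 'I_n) : Prop :=
  forall i j : 'I_n, connect e i j.

Definition irregular (n : nat) (e : rel 'I_n) : Prop :=
  exists i j : 'I_n, deg e i <> deg e j.

(* Everything is read off Rayleigh quotients.  Since
   A_a = (1 - a) Q + (2a - 1) D  and  a Q = A_a + (2a - 1) A,
   testing A_a on a Perron eigenvector x of Q gives
   rho(A_a) |x|^2 >= (1 - a) rho(Q) |x|^2 + (2a - 1) x D x^T  and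
   a rho(Q) |x|^2 <= rho(A_a) |x|^2 + (2a - 1) rho(A) |x|^2,
   while x D x^T <= Delta |x|^2.  When G is connected, x can be taken
   entrywise positive; if G is moreover irregular, x D x^T < Delta |x|^2,
   which makes (i) strict for a < 1/2, and equality in (ii) for a > 1/2
   would make x an eigenvector of A, hence of D = Q - A, so that all degrees
   coincide.  At a = 1/2 both bounds equal rho(Q)/2 = rho(A_{1/2}). *)

From HB Require Import structures.
From mathcomp Require Import all_boot all_order all_algebra.
From mathcomp Require Import complex.
From mathcomp Require Import ring lra.
Set Implicit Arguments. Unset Strict Implicit. Unset Printing Implicit Defensive.
Import Order.TTheory GRing.Theory Num.Theory.
Local Open Scope ring_scope.

Section NormalSpectral.
Local Open Scope sesquilinear_scope.
Variables (C : numClosedFieldType) (n : nat) (M : 'M[C]_n).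
Hypothesis Mnormal : M \is normalmx.
Let P := spectralmx M.
Let d := spectral_diag M.
Let Punitary : P \is unitarymx := spectral_unitarymx M.

Let M_spectral : M = P^t* *m diag_mx d *m P.
Proof. by rewrite -invmx_unitary //; apply/orthomx_spectralP. Qed.

Lemma normalmx_spectral_eigenvalue j : eigenvalue M (d 0 j).
Proof.
apply/eigenvalueP; exists (row j P).
  rewrite -row_mul M_spectral !mulmxA (unitarymxP Punitary) mul1mx.
  by rewrite row_mul row_diag_mx -scalemxAl -rowE.
apply/eqP => /(congr1 (mulmx^~ (P^t*))); rewrite -row_mul (unitarymxP Punitary).
by rewrite mul0mx => /rowP /(_ j); rewrite !mxE eqxx => /eqP; rewrite oner_eq0.
Qed.

Lemma normalmx_form_le r (x : 'rV[C]_n) : (forall j, d 0 j <= r) ->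
  (x *m M *m x^t*) 0 0 <= r * (x *m x^t*) 0 0.
Proof.
move=> d_le; set y := x *m P^t*.
have yt : y^t* = P *m x^t*.
  by rewrite /y trmx_mul map_mxM -map_trmx trmxK -map_mx_comp (map_mx_id (@conjCK _)).
have -> : x *m M *m x^t* = y *m diag_mx d *m y^t* by rewrite yt M_spectral !mulmxA.
have -> : x *m x^t* = y *m y^t* by rewrite yt mulmxA mulmxKtV.
rewrite mul_mx_diag !mxE mulr_sumr; apply: ler_sum => j _; rewrite !mxE mulrAC mulrC.
by apply: ler_wpM2r; [exact: mul_conjC_ge0 | exact: d_le].
Qed.

End NormalSpectral.

Section BilinearForm.
Variable R : comNzRingType.

Definition bform n (M : 'M[R]_n) (x y : 'rV[R]_n) : R := (x *m M *m y^T) 0 0.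

Lemma bformE n (M : 'M[R]_n) x y :
  bform M x y = \sum_j (\sum_i x 0 i * M i j) * y 0 j.
Proof. by rewrite /bform !mxE; apply: eq_bigr => j _; rewrite !mxE. Qed.

Lemma bform_sym n (M : 'M[R]_n) x y : M^T = M -> bform M x y = bform M y x.
Proof.
move=> Msym; rewrite /bform -[in RHS](trmxK y) -[in RHS]Msym -!trmx_mul mulmxA.
by rewrite [RHS]mxE.
Qed.

Lemma bformDl n (M : 'M[R]_n) x1 x2 y : bform M (x1 + x2) y = bform M x1 y + bform M x2 y.
Proof. by rewrite /bform !mulmxDl mxE. Qed.

Lemma bformDr n (M : 'M[R]_n) x y1 y2 : bform M x (y1 + y2) = bform M x y1 + bform M x y2.
Proof. by rewrite /bform linearD /= mulmxDr mxE. Qed.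

Lemma bformZl n (M : 'M[R]_n) a x y : bform M (a *: x) y = a * bform M x y.
Proof. by rewrite /bform -!scalemxAl mxE. Qed.

Lemma bformZr n (M : 'M[R]_n) a x y : bform M x (a *: y) = a * bform M x y.
Proof. by rewrite /bform linearZ /= -scalemxAr mxE. Qed.

Lemma bformMD n (M N : 'M[R]_n) x y : bform (M + N) x y = bform M x y + bform N x y.
Proof. by rewrite /bform mulmxDr mulmxDl mxE. Qed.

Lemma bformMZ n (M : 'M[R]_n) a x y : bform (a *: M) x y = a * bform M x y.
Proof. by rewrite /bform -scalemxAr -scalemxAl mxE. Qed.

Lemma bform_eigenvector n (M : 'M[R]_n) r x y :
  x *m M = r *: x -> bform M x y = r * bform 1%:M x y.
Proof. by move=> xM; rewrite /bform xM mulmx1 -scalemxAl mxE. Qed.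

Lemma bform_diag n (d : 'rV[R]_n) x : bform (diag_mx d) x x = \sum_i d 0 i * x 0 i ^+ 2.
Proof. by rewrite /bform mul_mx_diag mxE; apply: eq_bigr => i _; rewrite !mxE; ring. Qed.

Lemma bform1E n (x : 'rV[R]_n) : bform 1%:M x x = \sum_i x 0 i ^+ 2.
Proof. by rewrite -diag_const_mx bform_diag; under eq_bigr do rewrite mxE mul1r. Qed.

End BilinearForm.

Lemma bform1_gt0 (R : realDomainType) n (x : 'rV[R]_n) : x != 0 -> 0 < bform 1%:M x x.
Proof.
case/rV0Pn => j xj; rewrite bform1E (bigD1 j) //=.
apply: ltr_pwDl; first by rewrite exprn_even_gt0 ?xj ?orbT.
by apply: sumr_ge0 => i _; rewrite sqr_ge0.
Qed.

Lemma psd_bform_eq0 (R : realFieldType) n (P : 'M[R]_n) x :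
  P^T = P -> (forall y, 0 <= bform P y y) -> bform P x x = 0 -> x *m P = 0.
Proof.
move=> Psym Ppsd Px0.
suff Px v : bform P x v = 0.
  by apply/rowP => j; have := Px (delta_mx 0 j); rewrite /bform trmx_delta -colE !mxE.
set b := bform P x v; set c := bform P v v.
have c_ge0 : 0 <= c by exact: Ppsd.
have c1_neq0 : c + 1 != 0 by rewrite gt_eqF // ltr_pwDr.
(* Positivity on [x + t v] with [t (c + 1) = - b] reads [0 <= - t^2 (c + 2)]. *)
set t := - b / (c + 1).
have bt : b = - t * (c + 1) by rewrite /t; field.
have := Ppsd (x + t *: v).
rewrite !(bformDl, bformDr, bformZl, bformZr) Px0 [bform P v x]bform_sym // -/b -/c bt.
move=> h; have t2_le0 : t ^+ 2 <= 0 by nra.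
have -> : t = 0 by apply/eqP; rewrite -sqrf_eq0 eq_le t2_le0 sqr_ge0.
by rewrite oppr0 mul0r.
Qed.

Section Rayleigh.
Variable R : rcfType.
Local Notation toC := (real_complex R).
Local Open Scope sesquilinear_scope.

Lemma eigenvalue_real_complex n (M : 'M[R]_n) a :
  eigenvalue (map_mx toC M) (toC a) = eigenvalue M a.
Proof. by rewrite !eigenvalue_root_char -map_char_poly fmorph_root. Qed.

Lemma trmxC_real_complex m k (B : 'M[R]_(m, k)) : (map_mx toC B)^t* = map_mx toC B^T.
Proof.
by apply/matrixP => i j; rewrite !mxE conj_Creal //; apply/complex_realP; exists (B j i).
Qed.

Lemma rayleigh_le n (M : 'M[R]_n) r : M^T = M -> is_largest_eig M r ->
  forall x, bform M x x <= r * bform 1%:M x x.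
Proof.
move=> Msym [_ r_max] x; set Mc := map_mx toC M.
(* The spectral decomposition of the Hermitian complexification has real diagonal entries,
   which are therefore eigenvalues of [M]. *)
have Mc_herm : Mc \is hermsymmx.
  by apply/is_hermitianmxP; rewrite expr0 scale1r trmxC_real_complex Msym.
have d_le j : spectral_diag Mc 0 j <= toC r.
  have /mxOverP/(_ 0 j)/complex_realP [a da] := hermitian_spectral_diag_real Mc_herm.
  rewrite da lecR; apply: r_max; rewrite -eigenvalue_real_complex -da.
  exact/normalmx_spectral_eigenvalue/hermitian_normalmx.
have := normalmx_form_le (hermitian_normalmx Mc_herm) (map_mx toC x) d_le.
by rewrite -lecR rmorphM /= /bform mulmx1 trmxC_real_complex /Mc -!map_mxM !mxE.
Qed.

Lemma rayleigh_eq_eigenvector n (M : 'M[R]_n) r x : M^T = M -> is_largest_eig M r ->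
  bform M x x = r * bform 1%:M x x -> x *m M = r *: x.
Proof.
move=> Msym Mr xr; set P := r%:M - M.
have bP y : bform P y y = r * bform 1%:M y y - bform M y y.
  by rewrite /P -scaleN1r -[r%:M]scalemx1 bformMD !bformMZ mulN1r.
suff : x *m P = 0 by rewrite mulmxBr mul_mx_scalar => /eqP; rewrite subr_eq0 => /eqP.
apply: psd_bform_eq0 => [|y|]; last by rewrite bP xr subrr.
  by rewrite /P linearB /= tr_scalar_mx Msym.
by rewrite bP subr_ge0 (rayleigh_le Msym Mr).
Qed.

End Rayleigh.

Section LargestEigenvalue.
Variable R : realFieldType.

Lemma is_largest_eig_unique n (M : 'M[R]_n) r s :
  is_largest_eig M r -> is_largest_eig M s -> r = s.
Proof. by move=> [Mr r_max] [Ms s_max]; apply: le_anti; rewrite s_max ?r_max. Qed.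

Lemma is_largest_eigZ n (M : 'M[R]_n) c r : 0 < c ->
  is_largest_eig M r -> is_largest_eig (c *: M) (c * r).
Proof.
move=> c_gt0 [/eigenvalueP [v vM v_neq0] r_max]; split.
  by apply/eigenvalueP; exists v; rewrite // -scalemxAr vM scalerA mulrC.
move=> mu /eigenvalueP [w wM w_neq0].
have ci_gt0 : 0 < c^-1 by rewrite invr_gt0.
rewrite -(ler_pM2l ci_gt0) mulKf ?gt_eqF //; apply: r_max; apply/eigenvalueP.
by exists w; rewrite // -scalerA -wM -scalemxAr scalerA mulVf ?gt_eqF // scale1r.
Qed.

End LargestEigenvalue.

Lemma nonneg_largest_eigenvector (R : rcfType) n (M : 'M[R]_n) r :
  M^T = M -> (forall i j, 0 <= M i j) -> is_largest_eig M r ->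
  exists y : 'rV_n, [/\ y *m M = r *: y, y != 0 & forall i, 0 <= y 0 i].
Proof.
move=> Msym M_ge0 Mr; have [/eigenvalueP [x xM x_neq0] _] := Mr.
(* [|x|] does at least as well as [x] in the Rayleigh quotient, so it is an eigenvector too. *)
set y := map_mx Num.norm x.
have yx : bform 1%:M y y = bform 1%:M x x.
  by rewrite !bform1E; apply: eq_bigr => i _; rewrite mxE real_normK ?num_real.
have xy : bform M x x <= bform M y y.
  rewrite !bformE; apply: ler_sum => j _; rewrite !mulr_suml; apply: ler_sum => i _.
  by rewrite !mxE; apply: le_trans (ler_norm _) _; rewrite !normrM (ger0_norm (M_ge0 _ _)).
exists y; split=> [||i]; last by rewrite mxE.
- apply: (rayleigh_eq_eigenvector Msym Mr); apply/eqP.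
  by rewrite eq_le rayleigh_le //= yx -(bform_eigenvector _ xM).
- apply: contraNneq x_neq0 => y0; apply/eqP/rowP => i.
  by have := congr1 (fun v : 'rV_n => v 0 i) y0; rewrite !mxE => /normr0_eq0.
Qed.

Section Degrees.
Variables (n : nat) (e : rel 'I_n).

Lemma deg_le_maxdeg i : (deg e i <= maxdeg e)%N.
Proof. exact: (@leq_bigmax _ (fun i => deg e i)). Qed.

Lemma irregular_deg_lt_maxdeg : irregular e -> exists k, (deg e k < maxdeg e)%N.
Proof.
move=> [i [j dij]]; have [k lt_k | deg_max] := pickP (fun k => deg e k < maxdeg e)%N.
  by exists k.
have deg_eq k : deg e k = maxdeg e.
  by apply/eqP; rewrite eqn_leq deg_le_maxdeg leqNgt deg_max.
by case: dij; rewrite !deg_eq.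
Qed.

End Degrees.

Section GraphMatrices.
Variables (R : comNzRingType) (n : nat) (e : rel 'I_n).
Hypothesis e_sym : symmetric e.
Local Notation A := (adjmx R e).
Local Notation D := (degmx R e).
Local Notation Q := (signlessQ R e).

Lemma adjmx_sym : A^T = A.
Proof. by apply/matrixP => i j; rewrite !mxE e_sym. Qed.

Lemma degmx_diag : D = diag_mx (\row_i (deg e i)%:R).
Proof. by apply/matrixP => i j; rewrite !mxE; case: eqP => [->|_]; rewrite ?mulr1n ?mulr0n. Qed.

Lemma signlessQ_sym : Q^T = Q.
Proof. by rewrite /signlessQ linearD /= degmx_diag tr_diag_mx adjmx_sym. Qed.

Lemma Aalpha_sym (a : R) : (Aalpha e a)^T = Aalpha e a.
Proof. by rewrite /Aalpha linearD /= !linearZ /= degmx_diag tr_diag_mx adjmx_sym. Qed.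

Lemma Aalpha_signlessQ_degmx (a : R) : Aalpha e a = (1 - a) *: Q + (2 * a - 1) *: D.
Proof. by apply/matrixP => i j; rewrite !mxE; ring. Qed.

Lemma Aalpha_signlessQ_adjmx (a : R) : a *: Q = Aalpha e a + (2 * a - 1) *: A.
Proof. by apply/matrixP => i j; rewrite !mxE; ring. Qed.

End GraphMatrices.

Section GraphForms.
Variables (R : realDomainType) (n : nat) (e : rel 'I_n).
Local Notation D := (degmx R e).
Local Notation Q := (signlessQ R e).

Lemma bform_degmx (x : 'rV[R]_n) : bform D x x = \sum_i (deg e i)%:R * x 0 i ^+ 2.
Proof. by rewrite degmx_diag bform_diag; under eq_bigr do rewrite mxE. Qed.

Lemma bform_degmx_le (x : 'rV[R]_n) : bform D x x <= (maxdeg e)%:R * bform 1%:M x x.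
Proof.
rewrite bform_degmx bform1E mulr_sumr; apply: ler_sum => i _.
by rewrite ler_wpM2r ?sqr_ge0 // ler_nat deg_le_maxdeg.
Qed.

Lemma bform_degmx_lt (x : 'rV[R]_n) : irregular e -> (forall i, 0 < x 0 i) ->
  bform D x x < (maxdeg e)%:R * bform 1%:M x x.
Proof.
move=> /irregular_deg_lt_maxdeg [k deg_k] x_gt0.
rewrite -subr_gt0 bform_degmx bform1E mulr_sumr -sumrB (bigD1 k) //=.
apply: ltr_pwDl; first by rewrite -mulrBl mulr_gt0 ?exprn_gt0 // subr_gt0 ltr_nat.
apply: sumr_ge0 => i _; rewrite -mulrBl mulr_ge0 ?sqr_ge0 //.
by rewrite subr_ge0 ler_nat deg_le_maxdeg.
Qed.

Lemma signlessQ_ge0 i j : 0 <= Q i j.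
Proof. by rewrite !mxE addr_ge0 //; case: eqP. Qed.

Lemma signlessQ_eigenvector_gt0 (y : 'rV[R]_n) r : simple_graph e -> connected_graph e ->
  y *m Q = r *: y -> y != 0 -> (forall i, 0 <= y 0 i) -> forall i, 0 < y 0 i.
Proof.
move=> [e_sym e_irr] e_conn yQ y_neq0 y_ge0.
have zero_edge i j : e i j -> y 0 i = 0 -> y 0 j = 0.
  move=> eij yi0; have /rowP /(_ i) := yQ; rewrite !mxE yi0 mulr0 => sum0.
  have /(_ j isT) := psumr_eq0P (fun k _ => mulr_ge0 (y_ge0 k) (signlessQ_ge0 k i)) sum0.
  have ji : (j == i) = false by apply: contraTF eij => /eqP ->; rewrite e_irr.
  by rewrite !mxE ji e_sym eij add0r mulr1.
have zero_path p i : path e i p -> y 0 i = 0 -> y 0 (last i p) = 0.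
  by elim: p i => [|j p IHp] i //= /andP [eij pj] /(zero_edge _ _ eij); apply: IHp.
have [k yk] := rV0Pn _ y_neq0.
move=> i; rewrite lt_def y_ge0 andbT; apply: contraNneq yk => yi0.
by have /connectP [p pth ->] := e_conn i k; rewrite zero_path.
Qed.

Lemma degmx_eigenvector_regular (y : 'rV[R]_n) c : (forall i, 0 < y 0 i) ->
  y *m D = c *: y -> ~ irregular e.
Proof.
move=> y_gt0 yD; have deg_c i : (deg e i)%:R = c.
  have /rowP /(_ i) := yD; rewrite degmx_diag mul_mx_diag !mxE mulrC.
  exact/mulIf/lt0r_neq0/y_gt0.
by case=> i [j]; apply; apply/eqP; rewrite -(eqr_nat R) !deg_c.
Qed.

End GraphForms.

Section AalphaSpectralRadius.
Variables (R : rcfType) (n : nat) (e : rel 'I_n).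
Hypothesis He : simple_graph e.
Variables (alpha rhoA rhoQ rhoAa : R).
Hypothesis HA : is_largest_eig (adjmx R e) rhoA.
Hypothesis HQ : is_largest_eig (signlessQ R e) rhoQ.
Hypothesis HAa : is_largest_eig (Aalpha e alpha) rhoAa.
Local Notation A := (adjmx R e).
Local Notation D := (degmx R e).
Local Notation Q := (signlessQ R e).
Local Notation Delta := ((maxdeg e)%:R : R).

Let e_sym : symmetric e := proj1 He.

Lemma rho_Aalpha_half : alpha = 2^-1 -> rhoAa = 2^-1 * rhoQ.
Proof.
move=> a_half; apply: is_largest_eig_unique HAa _; rewrite a_half.
have -> : Aalpha e 2^-1 = 2^-1 *: Q.
  by rewrite Aalpha_signlessQ_degmx divff ?pnatr_eq0 // subrr scale0r addr0; congr (_ *: _); lra.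
by apply: is_largest_eigZ; rewrite // invr_gt0 ltr0n.
Qed.

Lemma signlessQ_positive_eigenvector : connected_graph e ->
  exists y : 'rV_n, [/\ y *m Q = rhoQ *: y, y != 0 & forall i, 0 < y 0 i].
Proof.
move=> e_conn; have [y [yQ y_neq0 y_ge0]] :=
  nonneg_largest_eigenvector (signlessQ_sym _ e_sym) (@signlessQ_ge0 R n e) HQ.
by exists y; split=> //; apply: signlessQ_eigenvector_gt0 yQ y_neq0 y_ge0.
Qed.

Lemma rho_Aalpha_ge_Q_degmx x : x *m Q = rhoQ *: x ->
  (1 - alpha) * rhoQ * bform 1%:M x x + (2 * alpha - 1) * bform D x x
    <= rhoAa * bform 1%:M x x.
Proof.
move=> xQ; have := rayleigh_le (Aalpha_sym e_sym alpha) HAa x.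
by rewrite Aalpha_signlessQ_degmx bformMD !bformMZ (bform_eigenvector _ xQ) mulrA.
Qed.

Lemma bform_Aalpha_adjmx_Q_eigenvector x : x *m Q = rhoQ *: x ->
  alpha * rhoQ * bform 1%:M x x = bform (Aalpha e alpha) x x + (2 * alpha - 1) * bform A x x.
Proof.
move=> xQ; rewrite -mulrA -(bform_eigenvector _ xQ) -bformMZ.
by rewrite Aalpha_signlessQ_adjmx bformMD bformMZ.
Qed.

Lemma rho_Aalpha_ge_Q_maxdeg : alpha <= 2^-1 ->
  (1 - alpha) * rhoQ + (2 * alpha - 1) * Delta <= rhoAa.
Proof.
move=> a_le; have [/eigenvalueP [x xQ x_neq0] _] := HQ.
have s_gt0 := bform1_gt0 x_neq0; rewrite -(ler_pM2r s_gt0).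
have := rho_Aalpha_ge_Q_degmx xQ; have := bform_degmx_le e x.
have : 2 * alpha - 1 <= 0 by lra.
nra.
Qed.

Lemma rho_Aalpha_gt_Q_maxdeg : alpha < 2^-1 -> connected_graph e -> irregular e ->
  (1 - alpha) * rhoQ + (2 * alpha - 1) * Delta < rhoAa.
Proof.
move=> a_lt e_conn e_irr; have [y [yQ y_neq0 y_gt0]] := signlessQ_positive_eigenvector e_conn.
have s_gt0 := bform1_gt0 y_neq0; rewrite -(ltr_pM2r s_gt0).
have := rho_Aalpha_ge_Q_degmx yQ; have := bform_degmx_lt e_irr y_gt0.
have : 2 * alpha - 1 < 0 by lra.
nra.
Qed.

Lemma rho_Aalpha_ge_Q_adjmx : 2^-1 <= alpha ->
  alpha * rhoQ + (1 - 2 * alpha) * rhoA <= rhoAa.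
Proof.
move=> a_ge; have [/eigenvalueP [x xQ x_neq0] _] := HQ.
have s_gt0 := bform1_gt0 x_neq0; rewrite -(ler_pM2r s_gt0).
have := bform_Aalpha_adjmx_Q_eigenvector xQ; have := rayleigh_le (Aalpha_sym e_sym alpha) HAa x.
have := rayleigh_le (adjmx_sym _ e_sym) HA x.
have : 0 <= 2 * alpha - 1 by lra.
nra.
Qed.

Lemma rho_Aalpha_gt_Q_adjmx : 2^-1 < alpha -> connected_graph e -> irregular e ->
  alpha * rhoQ + (1 - 2 * alpha) * rhoA < rhoAa.
Proof.
move=> a_gt e_conn e_irr; rewrite lt_def rho_Aalpha_ge_Q_adjmx ?ltW // andbT.
apply/eqP => rho_eq; have [y [yQ y_neq0 y_gt0]] := signlessQ_positive_eigenvector e_conn.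
have yA : y *m A = rhoA *: y.
  apply: (rayleigh_eq_eigenvector (adjmx_sym _ e_sym) HA).
  have s_gt0 := bform1_gt0 y_neq0.
  have := bform_Aalpha_adjmx_Q_eigenvector yQ; have := rayleigh_le (Aalpha_sym e_sym alpha) HAa y.
  have yAy := rayleigh_le (adjmx_sym _ e_sym) HA y.
  have : 0 < 2 * alpha - 1 by lra.
  rewrite rho_eq => a_pos Aa_le Aa_decomp; apply/eqP; rewrite eq_le yAy /=; nra.
have yD : y *m D = (rhoQ - rhoA) *: y by rewrite scalerBl -yQ -yA mulmxDr addrK.
exact: degmx_eigenvector_regular y_gt0 yD e_irr.
Qed.

End AalphaSpectralRadius.

Theorem proposition11 (R : rcfType) (n : nat) (e : rel 'I_n)
  (He : simple_graph e) (alpha rhoA rhoQ rhoAa : R)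
  (HA : is_largest_eig (adjmx R e) rhoA)
  (HQ : is_largest_eig (signlessQ R e) rhoQ)
  (HAa : is_largest_eig (Aalpha e alpha) rhoAa) :
  (0 <= alpha -> alpha <= 2^-1 ->
     (1 - alpha) * rhoQ + (2 * alpha - 1) * (maxdeg e)%:R <= rhoAa /\
     (connected_graph e -> irregular e ->
        (rhoAa = (1 - alpha) * rhoQ + (2 * alpha - 1) * (maxdeg e)%:R
         <-> alpha = 2^-1)))
  /\
  (2^-1 <= alpha -> alpha <= 1 ->
     alpha * rhoQ + (1 - 2 * alpha) * rhoA <= rhoAa /\
     (connected_graph e -> irregular e ->
        (rhoAa = alpha * rhoQ + (1 - 2 * alpha) * rhoA <-> alpha = 2^-1))).
Proof.
have half := rho_Aalpha_half HQ HAa.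
have two_half : 2 * 2^-1 = 1 :> R by rewrite divff ?pnatr_eq0.
split=> [_ a_le | a_ge _].
  split=> [|e_conn e_irr]; first exact: (rho_Aalpha_ge_Q_maxdeg He HQ HAa a_le).
  split=> [rho_eq | a_half]; last by rewrite half // a_half two_half; lra.
  have [a_lt|a_gt|//] := ltgtP alpha 2^-1; last by move: a_le; rewrite leNgt a_gt.
  by have := rho_Aalpha_gt_Q_maxdeg He HQ HAa a_lt e_conn e_irr; rewrite rho_eq ltxx.
split=> [|e_conn e_irr]; first exact: (rho_Aalpha_ge_Q_adjmx He HA HQ HAa a_ge).
split=> [rho_eq | a_half]; last by rewrite half // a_half two_half; lra.
have [a_lt|a_gt|//] := ltgtP alpha 2^-1; first by move: a_ge; rewrite leNgt a_lt.
by have := rho_Aalpha_gt_Q_adjmx He HA HQ HAa a_gt e_conn e_irr; rewrite rho_eq ltxx.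
Qed.
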